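(* Let $G$ be a median graph, let $p,q$ be vertices of $G$, and let $k$ be the largest dimension of a cube subgraph of the subgraph $G(I(p,q))$ induced by $I(p,q)$. Then (i) for every vertex $v\in I(p,q)$ and any $m$ distinct neighbors $y_1,\dots,y_m$ of $v$ lying in $I(v,q)$, there is an $m$-dimensional cube subgraph of $G$ contained in $I(v,q)$ and containing $v,y_1,\dots,y_m$; and (ii) $G(I(p,q))$ admits an isometric embedding into the $k$-dimensional grid $\mathbb Z^k=\prod_{i=1}^k P_i$ (Cartesian product of $k$ two-way infinite paths, with its graph metric).
   Context: A median graph is a connected graph in which for every three vertices $u,v,w$ the set $I(u,v)\cap I(v,w)\cap I(w,u)$ consists of a single vertex, where $I(a,b)=\{z:d_G(a,z)+d_G(z,b)=d_G(a,b)\}$ and $d_G$ is the graph distance. $G(S)$ denotes the subgraph induced by a vertex set $S$. An $m$-dimensional cube subgraph is a subgraph isomorphic to the hypercube graph $Q_m$. An isometric embedding of graphs is a map $f$ with $d(f(a),f(b))=d_G(a,b)$ for all vertices $a,b$. *)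

From HB Require Import structures.
From mathcomp Require Import all_boot all_order all_algebra.
Set Implicit Arguments. Unset Strict Implicit. Unset Printing Implicit Defensive.
Import Order.TTheory GRing.Theory Num.Theory.

Inductive gwalk (T : Type) (e : T -> T -> Prop) : T -> T -> nat -> Prop :=
| walk0 a : gwalk e a a 0
| walkS a b c n : e a b -> gwalk e b c n -> gwalk e a c n.+1.

Definition gdist (T : Type) (e : T -> T -> Prop) (a b : T) (n : nat) : Prop :=
  gwalk e a b n /\ forall m, gwalk e a b m -> n <= m.

Definition connected (T : Type) (e : T -> T -> Prop) : Prop :=
  forall a b, exists n, gwalk e a b n.

Definition simple_graph (T : Type) (e : T -> T -> Prop) : Prop :=
  (forall a b, e a b -> e b a) /\ (forall a, ~ e a a).

Definition ginterval (T : Type) (e : T -> T -> Prop) (a b z : T) : Prop :=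
  exists n1 n2, gdist e a z n1 /\ gdist e z b n2 /\ gdist e a b (n1 + n2).

Definition median_graph (T : Type) (e : T -> T -> Prop) : Prop :=
  [/\ simple_graph e, connected e &
      forall u v w, exists! x,
        ginterval e u v x /\ ginterval e v w x /\ ginterval e w u x].

Definition qadj (m : nat) (x y : {ffun 'I_m -> bool}) : Prop :=
  #|[set i | x i != y i]| = 1%N.

(* f is (the vertex map of) an m-dimensional cube subgraph of G whose
   vertices all lie in S: an injective, edge-preserving map Q_m -> G *)
Definition cube_in (T : Type) (e : T -> T -> Prop) (S : T -> Prop) (m : nat)
  (f : {ffun 'I_m -> bool} -> T) : Prop :=
  [/\ injective f, (forall x y, qadj x y -> e (f x) (f y)) & forall x, S (f x)].

Definition ginduced (T : Type) (e : T -> T -> Prop) (S : T -> Prop)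
  (a b : {z : T | S z}) : Prop := e (proj1_sig a) (proj1_sig b).

Definition grid_adj (k : nat) (x y : 'I_k -> int) : Prop :=
  exists i : 'I_k, `|x i - y i|%R = 1%R /\ forall j, j != i -> x j = y j.

(* Halfspaces W_ab = {z | d(z,a) < d(z,b)} of a median graph, for an edge ab,
   are convex.  Fix a geodesic p = g_0, ..., g_L = q.  A vertex x of I(p,q) is
   determined by its label, the set of edges g_i g_(i+1) across which x lies on
   the side of q: the label has d(p,x) elements, and the labels of med(p,x,y)
   and med(x,y,q) are the intersection and the union of those of x and y, so
   d(x,y) is the size of the symmetric difference of labels.  The labels that
   occur are exactly the down-sets of the order "every labelled vertex crossing
   edge j also crosses edge i".  An antichain of m edges, together with the
   down-set it generates, thus spans an m-cube; applied at v this gives (i),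
   and it bounds the width of the order by k.  Dilworth's theorem splits the
   edges into k chains, and counting the label elements in each chain embeds
   G(I(p,q)) isometrically in Z^k, since down-sets meet each chain in an
   initial segment. *)

From HB Require Import structures.
From mathcomp Require Import all_boot all_order all_algebra zify.
From mathcomp.classical Require Import boolp.
Set Implicit Arguments. Unset Strict Implicit. Unset Printing Implicit Defensive.

Section Walks.
Variables (T : Type) (e : T -> T -> Prop).

Lemma gwalk_cat a b c n m : gwalk e a b n -> gwalk e b c m -> gwalk e a c (n + m).
Proof. by elim=> [//|x y z k Hxy _ IH] /IH; rewrite addSn; apply: walkS. Qed.

Lemma gwalk_snoc a b c n : gwalk e a b n -> e b c -> gwalk e a c n.+1.
Proof. by move=> Hab Hbc; rewrite -addn1; apply: gwalk_cat Hab (walkS Hbc (walk0 e c)). Qed.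

Lemma gwalk_rev a b n : (forall x y, e x y -> e y x) -> gwalk e a b n -> gwalk e b a n.
Proof.
move=> e_sym; elim=> [x|x y z k Hxy _ IH]; first exact: walk0.
exact: gwalk_snoc IH (e_sym _ _ Hxy).
Qed.

Lemma gwalk_map (U : Type) (f : U -> T) (r : U -> U -> Prop) a b n :
  (forall x y, r x y -> e (f x) (f y)) -> gwalk r a b n -> gwalk e (f a) (f b) n.
Proof.
move=> Hf; elim=> [x|x y z k Hxy _ IH]; first exact: walk0.
exact: walkS (Hf _ _ Hxy) IH.
Qed.

End Walks.

Section Dilworth.
Variables (U : finType) (le : rel U).
Hypotheses (le_refl : reflexive le) (le_anti : antisymmetric le)
  (le_trans : transitive le).

Definition comparable x y := le x y || le y x.

Definition antichain (B : {set U}) : bool :=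
  [forall x in B, forall y in B, le x y ==> (x == y)].

Lemma antichainP (B : {set U}) : reflect {in B &, forall x y, le x y -> x = y} (antichain B).
Proof.
apply: (iffP forall_inP) => [H x y Hx Hy Hxy | H x Hx].
  by have /forall_inP/(_ y Hy) := H x Hx; rewrite Hxy => /eqP.
by apply/forall_inP => y Hy; apply/implyP => /(H x y Hx Hy) ->.
Qed.

Definition width_at_most (X : {set U}) (w : nat) :=
  forall B : {set U}, B \subset X -> antichain B -> #|B| <= w.

Definition chain_coloring (X : {set U}) (w : nat) (c : U -> nat) :=
  {in X, forall x, c x < w} /\ {in X &, forall x y, c x = c y -> comparable x y}.

Lemma exists_maximal (Y : {set U}) y0 : y0 \in Y ->
  exists2 a, a \in Y & {in Y, forall y, le a y -> y = a}.
Proof.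
move=> Hy0.
have [a Ha Hmax] := arg_maxnP (fun i => #|[set z in Y | le z i]|) Hy0.
exists a => // y Hy Hay; case Hya: (le y a); first by apply: le_anti; rewrite Hya.
have: [set z in Y | le z a] \proper [set z in Y | le z y].
  apply/properP; split; last by exists y; rewrite !inE ?Hy ?le_refl ?Hya.
  by apply/subsetP => z; rewrite !inE => /andP[-> Hz]; apply: le_trans Hay.
by move/proper_card; have := Hmax y Hy; rewrite /=; lia.
Qed.

Lemma chain_coloring_extend (X K : {set U}) w (c : U -> nat) :
  0 < w -> K \subset X -> {in K &, forall x y, comparable x y} ->
  chain_coloring (X :\: K) w.-1 c ->
  chain_coloring X w (fun x => if x \in K then w.-1 else c x).
Proof.
move=> w_gt0 KX Kchain [c_lt c_chain]; have XK x: x \in X -> x \notin K -> x \in X :\: K.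
  by rewrite inE => -> ->.
split=> [x Hx | x y Hx Hy]; case: ifP => HxK.
- by rewrite prednK.
- by have := c_lt x (XK x Hx (negbT HxK)); lia.
- case: ifP => HyK E; first exact: Kchain.
  by have := c_lt y (XK y Hy (negbT HyK)); lia.
- case: ifP => HyK; last exact: c_chain (XK x Hx (negbT HxK)) (XK y Hy (negbT HyK)).
  by have := c_lt x (XK x Hx (negbT HxK)); lia.
Qed.

Section Coloring.
Variables (X : {set U}) (w : nat) (c : U -> nat).
Hypothesis cX : chain_coloring X w c.

Lemma antichain_colors_surj (B : {set U}) : B \subset X -> antichain B -> w <= #|B| ->
  forall t, t < w -> exists2 x, x \in B & c x = t.
Proof.
move=> BX /antichainP Banti wB t tw; have [c_lt c_chain] := cX.
have c_inj : {in B &, injective c}.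
  move=> x y Hx Hy /(c_chain x y (subsetP BX x Hx) (subsetP BX y Hy))/orP[] Hxy.
    exact: Banti.
  by apply/esym/Banti.
have Hu : uniq (map c (enum B)).
  by rewrite map_inj_in_uniq ?enum_uniq // => x y; rewrite !mem_enum; apply: c_inj.
have Hs : {subset map c (enum B) <= iota 0 w}.
  move=> u /mapP[x]; rewrite mem_enum => Hx ->.
  by rewrite mem_iota add0n; apply: c_lt (subsetP BX x Hx).
have [_ E] := uniq_min_size Hu Hs ltac:(by rewrite size_iota size_map -cardE).
have : t \in iota 0 w by rewrite mem_iota.
by rewrite -E => /mapP[x]; rewrite mem_enum => Hx ->; exists x.
Qed.

Lemma colors_surj_card (B : {set U}) :
  (forall t, t < w -> exists2 x, x \in B & c x = t) -> w <= #|B|.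
Proof.
move=> H; have Hs : {subset iota 0 w <= map c (enum B)}.
  by move=> t; rewrite mem_iota add0n => /H[x Hx <-]; apply: map_f; rewrite mem_enum.
by have := uniq_leq_size (iota_uniq 0 w) Hs; rewrite size_iota size_map -cardE.
Qed.

Definition max_antichain (B : {set U}) := [&& B \subset X, antichain B & w <= #|B|].

(* Galvin's argument: in each color class, the largest element lying on a
   maximum antichain; these elements form a maximum antichain again. *)
Lemma max_antichain_tops : (exists B, max_antichain B) ->
  exists2 A, max_antichain A &
    {in A, forall x B, max_antichain B -> {in B, forall y, c y = c x -> le y x}}.
Proof.
move=> [B0 HB0].
pose M := [set x | [exists B, max_antichain B && (x \in B)]].
have inM x B : max_antichain B -> x \in B -> x \in M.
  by move=> HB Hx; rewrite inE; apply/existsP; exists B; rewrite HB.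
have MX x : x \in M -> x \in X.
  by rewrite inE => /existsP[B /andP[/and3P[BX _ _] Hx]]; apply: subsetP BX x Hx.
pose A := [set x in M | [forall y in M, (c y == c x) ==> le y x]].
have topA x : x \in A -> x \in M /\ {in M, forall y, c y = c x -> le y x}.
  rewrite inE => /andP[xM /forall_inP H]; split=> // y yM cyx.
  by have := H y yM; rewrite cyx eqxx.
have A_surj t : t < w -> exists2 x, x \in A & c x = t.
  move=> tw; have /and3P[B0X B0a wB0] := HB0.
  have [x0 Hx0 <-] := antichain_colors_surj B0X B0a wB0 tw.
  have : x0 \in [set y in M | c y == c x0] by rewrite inE (inM _ B0) ?eqxx.
  move=> /exists_maximal[x]; rewrite inE => /andP[xM /eqP cx] xmax.
  exists x => //; rewrite inE xM; apply/forall_inP => y yM; apply/implyP => /eqP cyx.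
  have [//|Hxy] := orP (cX.2 y x (MX y yM) (MX x xM) cyx).
  by rewrite (xmax y) // inE yM cyx cx eqxx.
have A_anti : antichain A.
  apply/antichainP => x y /topA[xM topx] /topA[yM _] Hxy.
  have [cxy|cxy] := eqVneq (c x) (c y); first by apply: le_anti; rewrite Hxy (topx y yM (esym cxy)).
  move: (yM); rewrite inE => /existsP[B /andP[HB yB]]; have /and3P[BX Ba wB] := HB.
  have [z zB czx] := antichain_colors_surj BX Ba wB (cX.1 x (MX x xM)).
  have zy : z = y.
    by apply: (antichainP _ Ba) => //; apply: le_trans Hxy; apply: topx (inM z B HB zB) czx.
  by rewrite -zy czx eqxx in cxy.
exists A.
  apply/and3P; split=> //; last exact: colors_surj_card.
  by apply/subsetP => x /topA[/MX].
by move=> x /topA[_ topx] B HB y yB; apply: topx; apply: inM yB.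
Qed.

Lemma width_drop x0 : x0 \in X ->
  (forall B, max_antichain B -> {in B, forall y, c y = c x0 -> le y x0}) ->
  width_at_most (X :\: [set y in X | (c y == c x0) && le y x0]) w.-1.
Proof.
move=> x0X top B /subset_trans BX Ba; rewrite leqNgt; apply/negP => wB.
have HB : max_antichain B by rewrite /max_antichain (BX _ (subsetDl _ _)) Ba; lia.
have /and3P[_ _ wB'] := HB.
have [z zB czx] := antichain_colors_surj (BX _ (subsetDl _ _)) Ba wB' (cX.1 x0 x0X).
have := subsetP (BX _ (subxx _)) z zB.
by rewrite !inE czx eqxx (top B HB z zB czx) !andbT andNb.
Qed.

End Coloring.

Lemma max_antichain_comparable (X A : {set U}) w a :
  width_at_most X w -> A \subset X -> antichain A -> w <= #|A| ->
  a \in X -> a \notin A -> exists2 x, x \in A & comparable a x.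
Proof.
move=> Xw AX Aa wA aX aA; apply: contrapT => noA.
have : #|a |: A| <= w.
  apply: Xw; first by rewrite subUset sub1set aX.
  apply/antichainP => x y; rewrite !in_setU1 => /predU1P[->|xA] /predU1P[->|yA] xy //.
  - by case: noA; exists y => //; rewrite /comparable xy.
  - by case: noA; exists x => //; rewrite /comparable xy orbT.
  - exact: (antichainP _ Aa).
by rewrite cardsU1 aA; lia.
Qed.

Lemma dilworth_coloring N (X : {set U}) w : #|X| <= N -> width_at_most X w ->
  exists c, chain_coloring X w c.
Proof.
elim: N X w => [|N IH] X w XN Xw; have [->|[y0 Hy0]] := set_0Vmem X;
  try by exists (fun _ => 0); split=> x; rewrite inE.
  by move: XN; rewrite leqn0 => /eqP/cards0_eq X0; rewrite X0 inE in Hy0.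
have [a aX amax] := exists_maximal Hy0.
have w_gt0 : 0 < w.
  have := Xw [set a]; rewrite cards1 sub1set aX; apply=> //.
  by apply/antichainP => x y /set1P-> /set1P->.
have remove_chain (K : {set U}) : a \in K -> K \subset X -> {in K &, forall x y, comparable x y} ->
    width_at_most (X :\: K) w.-1 -> exists c, chain_coloring X w c.
  move=> aK KX Kchain XKw.
  have XKN : #|X :\: K| <= N.
    have := cardsID K X; have : 0 < #|X :&: K| by apply/card_gt0P; exists a; rewrite inE aX.
    lia.
  have [c cXK] := IH _ _ XKN XKw.
  by exists (fun x => if x \in K then w.-1 else c x); apply: chain_coloring_extend.
pose X' := X :\ a; have X'X : X' \subset X by apply: subsetDl.
have [[B0 HB0]|noB] := pselect (exists B, max_antichain X' w B); last first.
  apply: (remove_chain [set a]); rewrite ?set11 ?sub1set //.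
    by move=> x y /set1P-> /set1P->; rewrite /comparable le_refl.
  move=> B BX' Ba; rewrite leqNgt; apply/negP => wB; apply: noB; exists B.
  by rewrite /max_antichain BX' Ba; lia.
have [c' c'X'] := IH X' w ltac:(by have := cardsD1 a X; rewrite aX add1n -/X'; lia)
  (fun B BX' => Xw B (subset_trans BX' X'X)).
have [A /and3P[AX' Aa wA] topA] := max_antichain_tops c'X' (ex_intro _ B0 HB0).
have aA : a \notin A by apply/negP => /(subsetP AX'); rewrite !inE eqxx.
have [x0 x0A ax0] := max_antichain_comparable Xw (subset_trans AX' X'X) Aa wA aX aA.
have x0X' : x0 \in X' := subsetP AX' x0 x0A.
have x0a : le x0 a.
  case/orP: ax0 => // ax0; move: (x0X').
  by rewrite !inE (amax x0 (subsetP X'X x0 x0X') ax0) eqxx.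
pose K0 := [set y in X' | (c' y == c' x0) && le y x0].
apply: (remove_chain (a |: K0)); first exact: setU11.
- rewrite subUset sub1set aX; apply/subsetP => y; rewrite inE => /andP[yX' _].
  exact: subsetP X'X y yX'.
- move=> x y; rewrite !in_setU1.
  move=> /predU1P[->|/setIdP[xX' /andP[/eqP cx xx0]]] /predU1P[->|/setIdP[yX' /andP[/eqP cy yx0]]].
  + by rewrite /comparable le_refl.
  + by rewrite /comparable (le_trans yx0 x0a) orbT.
  + by rewrite /comparable (le_trans xx0 x0a).
  + exact: c'X'.2 x y xX' yX' (etrans cx (esym cy)).
by rewrite -setDDl; exact: (width_drop c'X' x0X' (topA x0 x0A)).
Qed.

Theorem dilworth w : width_at_most [set: U] w ->
  exists c : U -> 'I_w, forall x y, c x = c y -> comparable x y.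
Proof.
move=> Uw; have [c [c_lt c_chain]] := dilworth_coloring (leqnn _) Uw.
exists (fun x => Ordinal (c_lt x (in_setT x))) => x y /(congr1 val) /= cxy.
exact: c_chain.
Qed.

Definition down_closed (A : {set U}) := forall x y, le x y -> y \in A -> x \in A.

Section ChainPartition.
Variables (k : nat) (c : U -> 'I_k).
Hypothesis c_chain : forall x y, c x = c y -> comparable x y.
Local Notation chain t := [set x | c x == t].

Lemma sum_card_chains (X : {set U}) : \sum_(t < k) #|X :&: chain t| = #|X|.
Proof.
rewrite -sum1_card (partition_big c predT) //=; apply: eq_bigr => t _.
by rewrite -sum1_card; apply: eq_bigl => x; rewrite !inE.
Qed.

Lemma down_closed_chain_nested (A B : {set U}) t : down_closed A -> down_closed B ->
  (A :&: chain t \subset B :&: chain t) || (B :&: chain t \subset A :&: chain t).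
Proof.
move=> Ad Bd; apply/orP; case: (boolP (A :&: chain t \subset _)) => [|/subsetPn[x]]; first by left.
rewrite !inE => /andP[xA /eqP xt] /nandP[xB|]; last by rewrite xt eqxx.
right; apply/subsetP => y; rewrite !inE => /andP[yB /eqP yt]; rewrite yt eqxx andbT.
have /orP[xy|yx] := c_chain (etrans xt (esym yt)); last exact: Ad yx xA.
by rewrite (Bd x y xy yB) in xB.
Qed.

Lemma down_closed_chains_dist (A B : {set U}) : down_closed A -> down_closed B ->
  \sum_(t < k) `|#|A :&: chain t| - #|B :&: chain t| | = #|A :\: B| + #|B :\: A|.
Proof.
move=> Ad Bd; rewrite -!(sum_card_chains (_ :\: _)) -big_split /=.
apply: eq_bigr => t _.
have DI (X Y : {set U}) : (X :\: Y) :&: chain t = (X :&: chain t) :\: (Y :&: chain t).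
  by apply/setP => x; rewrite !inE; case: (x \in X); case: (x \in Y); case: (c x == t).
rewrite !DI; set P := A :&: chain t; set Q := B :&: chain t.
have dist_nested (X Y : {set U}) : X \subset Y -> `|#|X| - #|Y| | = #|X :\: Y| + #|Y :\: X|.
  move=> XY; have -> : X :\: Y = set0 by apply/eqP; rewrite setD_eq0.
  by have := subset_leq_card XY; rewrite cardsD (setIidPr XY) cards0; lia.
case/orP: (down_closed_chain_nested t Ad Bd) => [/dist_nested //|/dist_nested].
by rewrite distnC addnC.
Qed.

End ChainPartition.

End Dilworth.

Section Grid.
Variable k : nat.

Definition l1_dist (u v : 'I_k -> int) : nat := \sum_(t < k) absz (u t - v t)%R.

Lemma l1_dist_adj (u w v : 'I_k -> int) : grid_adj u w -> l1_dist u v <= l1_dist w v + 1.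
Proof.
move=> [i [uwi uwj]].
have uw : \sum_(t < k) absz (u t - w t)%R = 1.
  rewrite (bigD1 i) //= big1 => [|t /uwj->]; last by rewrite GRing.subrr.
  by move: uwi; rewrite -abszE addn0 => -[].
have : l1_dist u v <= \sum_(t < k) (absz (u t - w t)%R + absz (w t - v t)%R).
  by apply: leq_sum => t _; apply: leqD_dist.
by rewrite big_split /= uw addnC.
Qed.

Lemma l1_dist_le_walk (u v : 'I_k -> int) m : gwalk (@grid_adj k) u v m -> l1_dist u v <= m.
Proof.
elim=> [x|x y z n xy _ IH]; last by have := l1_dist_adj z xy; lia.
by rewrite /l1_dist big1 // => t _; rewrite GRing.subrr.
Qed.

Definition natpt (F : 'I_k -> nat) (t : 'I_k) : int := (F t)%:Z.

Lemma l1_dist_natpt F G : l1_dist (natpt F) (natpt G) = \sum_(t < k) `|F t - G t|.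
Proof. by []. Qed.

Lemma grid_step_natpt (F G : 'I_k -> nat) t0 : F t0 != G t0 ->
  exists F', grid_adj (natpt F) (natpt F') /\
             l1_dist (natpt F') (natpt G) + 1 = l1_dist (natpt F) (natpt G).
Proof.
move=> Ft0; pose F' t := if t == t0 then (if F t0 < G t0 then (F t0).+1 else (F t0).-1) else F t.
exists F'; split.
  exists t0; split=> [|j /negbTE j_t0]; last by rewrite /natpt /F' j_t0.
  rewrite /natpt /F' eqxx -abszE; congr Posz.
  case: ifP => [_|/negbT]; first exact: distnS.
  by move: Ft0; case: (F t0) => [|n] /=; [lia | rewrite distSn].
rewrite !l1_dist_natpt (bigD1 t0) // [in RHS](bigD1 t0) //=.
have -> : \sum_(t < k | t != t0) `|F' t - G t| = \sum_(t < k | t != t0) `|F t - G t|.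
  by apply: eq_bigr => t /negbTE t_t0; rewrite /F' t_t0.
rewrite /F' eqxx; set S := \sum_(t < k | t != t0) _.
by move: Ft0; case: ifP => [lt|/negbT ge]; lia.
Qed.

Lemma grid_walk_natpt N (F G : 'I_k -> nat) : l1_dist (natpt F) (natpt G) = N ->
  gwalk (@grid_adj k) (natpt F) (natpt G) N.
Proof.
elim: N F => [|N IH] F FG.
  suff -> : natpt F = natpt G by apply: walk0.
  apply: funext => t; rewrite /natpt; apply/eqP; rewrite eqz_nat -distn_eq0.
  by rewrite -leqn0 -FG l1_dist_natpt (bigD1 t) //= leq_addr.
have [t0 Ft0] : exists t0, F t0 != G t0.
  apply: contrapT => FG'; move: FG; rewrite l1_dist_natpt big1 // => t _.
  by case: (eqVneq (F t) (G t)) => [->|ne]; [rewrite distnn | case: FG'; exists t].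
have [F' [FF' F'G]] := grid_step_natpt Ft0.
by apply: walkS FF' (IH F' _); rewrite FG addn1 in F'G; case: F'G.
Qed.

Lemma grid_gdist_natpt (F G : 'I_k -> nat) n :
  gdist (@grid_adj k) (natpt F) (natpt G) n <-> \sum_(t < k) `|F t - G t| = n.
Proof.
rewrite -l1_dist_natpt; split=> [[FG FGmin] | <-].
  by apply/eqP; rewrite eqn_leq l1_dist_le_walk // FGmin //; apply: grid_walk_natpt.
by split=> [|m]; [apply: grid_walk_natpt | apply: l1_dist_le_walk].
Qed.

End Grid.

Section MedianGraph.
Variables (T : Type) (e : T -> T -> Prop).
Hypotheses (e_sym : forall a b, e a b -> e b a) (e_irr : forall a, ~ e a a).
Hypothesis e_conn : connected e.
Hypothesis e_median : forall u v w, exists! x,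
  ginterval e u v x /\ ginterval e v w x /\ ginterval e w u x.

Lemma dist_ex a b : exists n, `[< gwalk e a b n >].
Proof. by have [n ab] := e_conn a b; exists n; apply/asboolP. Qed.

Definition dist a b : nat := ex_minn (dist_ex a b).

Lemma dist_walk a b : gwalk e a b (dist a b).
Proof. by rewrite /dist; case: ex_minnP => m /asboolP. Qed.

Lemma dist_le_walk a b m : gwalk e a b m -> dist a b <= m.
Proof. by rewrite /dist; case: ex_minnP => m0 _ min /asboolP/min. Qed.

Lemma gdistE a b n : gdist e a b n <-> dist a b = n.
Proof.
split=> [[ab abmin] | <-]; last by split=> [|m]; [apply: dist_walk | apply: dist_le_walk].
by apply/eqP; rewrite eqn_leq dist_le_walk // abmin //; apply: dist_walk.
Qed.

Lemma distC a b : dist a b = dist b a.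
Proof. by apply/eqP; rewrite eqn_leq !dist_le_walk //; apply: gwalk_rev e_sym (dist_walk _ _). Qed.

Lemma dist_triangle a b c : dist a c <= dist a b + dist b c.
Proof. by apply/dist_le_walk/gwalk_cat; apply: dist_walk. Qed.

Lemma distxx a : dist a a = 0.
Proof. by apply/eqP; rewrite -leqn0 dist_le_walk //; apply: walk0. Qed.

Lemma dist_eq0 a b : dist a b = 0 -> a = b.
Proof. by move=> ab0; have := dist_walk a b; rewrite ab0 => W; inversion W. Qed.

Lemma dist_adj a b : e a b -> dist a b = 1.
Proof.
move=> ab; apply/eqP; rewrite eqn_leq dist_le_walk /=; last exact: walkS ab (walk0 e b).
by rewrite lt0n; apply/eqP => /dist_eq0 a_b; subst; apply: e_irr ab.
Qed.

Lemma dist_succ a b n : dist a b = n.+1 -> exists c, e a c /\ dist c b = n.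
Proof.
move=> abn; have W := dist_walk a b; rewrite abn in W.
inversion W as [|x c y m ac cb]; subst; exists c; split=> //.
have := dist_le_walk cb; have := dist_triangle a c b; rewrite abn dist_adj //; lia.
Qed.

Lemma dist1_adj a b : dist a b = 1 -> e a b.
Proof. by move=> /dist_succ[c [ac /dist_eq0 <-]]. Qed.

Lemma dist_adj_le a x y : e x y -> dist a y <= dist a x + 1.
Proof. by move=> xy; rewrite -(dist_adj xy); apply: dist_triangle. Qed.

Definition between a b z := dist a z + dist z b = dist a b.

Lemma gintervalE a b z : ginterval e a b z <-> between a b z.
Proof.
rewrite /between; split=> [[n1 [n2 [/gdistE-> [/gdistE-> /gdistE->]]]] // | abz].
by exists (dist a z), (dist z b); rewrite !gdistE abz.
Qed.

Lemma betweenC a b z : between a b z -> between b a z.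
Proof. by rewrite /between distC (distC z b) (distC a b); lia. Qed.

Lemma between_l a b : between a b a.
Proof. by rewrite /between distxx. Qed.

Lemma between_r a b : between a b b.
Proof. by rewrite /between distxx addn0. Qed.

Lemma between_sub a b c z : between a b c -> between a c z ->
  between a b z /\ between z b c.
Proof.
rewrite /between; have := dist_triangle a z b; have := dist_triangle z c b.
have := dist_triangle a c b; split; lia.
Qed.

Lemma between_subr a b c z : between a b c -> between c b z ->
  between a b z /\ between a z c.
Proof.
by move=> /betweenC abc /betweenC cbz; have [] := between_sub abc cbz; split; apply: betweenC.
Qed.

Lemma median_ex u v w : exists x, [/\ between u v x, between v w x & between w u x].
Proof.
have [x [[uvx [vwx wux]] _]] := e_median u v w.
by exists x; split; apply/gintervalE.
Qed.

Definition median u v w : T := sval (cid (median_ex u v w)).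

Lemma medianP u v w :
  [/\ between u v (median u v w), between v w (median u v w) & between w u (median u v w)].
Proof. by rewrite /median; case: cid. Qed.

Lemma median_uniq u v w x :
  between u v x -> between v w x -> between w u x -> x = median u v w.
Proof.
move=> uvx vwx wux; have [y [_ y_uniq]] := e_median u v w.
have [uvm vwm wum] := medianP u v w.
by rewrite -(y_uniq x) ?(y_uniq (median u v w)) //; split; do ?split; apply/gintervalE.
Qed.

Lemma dist_adj_neq a x y : e x y -> dist a x <> dist a y.
Proof.
move=> xy axy; have [] := medianP a x y; rewrite /between.
have := dist_adj xy; set m := median a x y => xy1 axm xym yam.
have [/dist_eq0 xm | xm0] := eqVneq (dist x m) 0.
  by move: yam; rewrite -xm (distC y x) (distC x a) (distC y a); lia.
have [/dist_eq0 my | my0] := eqVneq (dist m y) 0; last lia.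
by move: axm; rewrite my (distC y x); lia.
Qed.

Lemma dist_adj_cases a x y : e x y ->
  dist a y = dist a x + 1 \/ dist a x = dist a y + 1.
Proof.
move=> xy; have := dist_adj_neq (a:=a) xy; have := dist_adj_le a xy.
have := dist_adj_le a (e_sym xy); lia.
Qed.

Lemma common_neighbors_dist a x y w : e w x -> e w y -> x <> y ->
  dist a x = dist a y -> dist x y = 2.
Proof.
move=> wx wy x_y axy.
have : dist x y <= 2.
  by have := dist_triangle x w y; rewrite (distC x w) (dist_adj wx) (dist_adj wy).
have : dist x y != 0 by apply/eqP => /dist_eq0.
have : dist x y != 1 by apply/eqP => /dist1_adj/(dist_adj_neq (a:=a)).
lia.
Qed.

Lemma quadrangle u w x y n : e w x -> e w y -> x <> y ->
  dist u w = n.+1 -> dist u x = n -> dist u y = n ->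
  exists z, [/\ e z x, e z y & dist u z + 1 = n].
Proof.
move=> wx wy x_y uw ux uy.
have xy2 : dist x y = 2 by apply: (common_neighbors_dist (a:=u) wx wy x_y); rewrite ux uy.
have [] := medianP u x y; rewrite /between; set z := median u x y => uxz xyz yuz.
have xz0 : dist x z != 0.
  by apply/eqP => /dist_eq0 xz; move: yuz; rewrite -xz (distC y x) (distC x u) (distC y u); lia.
have zy0 : dist z y != 0 by apply/eqP => /dist_eq0 zy; move: uxz; rewrite zy (distC y x); lia.
exists z; split.
- by apply/e_sym/dist1_adj; lia.
- by apply: dist1_adj; lia.
- by move: uxz; rewrite (distC z x); lia.
Qed.

Definition halfspace (a b z : T) : bool := dist z a < dist z b.

Lemma halfspace_between a b y z : e a b ->
  halfspace b a y -> between b y z -> halfspace b a z.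
Proof.
rewrite /halfspace /between => ab bay byz.
have := dist_triangle y z a; have := distC b z; have := distC z y; have := distC b y.
by case: (dist_adj_cases y ab); case: (dist_adj_cases z ab); lia.
Qed.

Section Halfspace.
Variables a b : T.
Hypothesis ab : e a b.

Lemma halfspaceN z : ~~ halfspace b a z = halfspace a b z.
Proof. by rewrite /halfspace; case: (dist_adj_cases z ab); lia. Qed.

Lemma cross_dist z x : halfspace a b z -> halfspace b a x -> e z x ->
  [/\ dist x b = dist z a, dist x a = dist z a + 1 & dist z b = dist z a + 1].
Proof.
rewrite /halfspace => abz bax zx.
have := dist_adj_cases a zx; have := dist_adj_cases b zx.
rewrite (distC a z) (distC a x) (distC b z) (distC b x).
by case: (dist_adj_cases z ab); case: (dist_adj_cases x ab); split; lia.
Qed.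

Lemma cross_neighbor_uniq z x w : halfspace a b z -> halfspace b a x -> halfspace b a w ->
  e z x -> e z w -> x = w.
Proof.
move=> abz bax baw zx zw; apply: contrapT => x_w.
have [xb xa zb] := cross_dist abz bax zx; have [wb wa _] := cross_dist abz baw zw.
set al := dist z a in xb xa zb wb wa.
have [v [vx vw bv]] : exists v, [/\ e v x, e v w & dist b v + 1 = al].
  by apply: (quadrangle zx zw x_w); rewrite distC ?zb ?addn1.
have xw2 : dist x w = 2.
  by apply: (common_neighbors_dist (a:=b) zx zw x_w); rewrite (distC b x) (distC b w) xb wb.
have va : dist v a = al.
  have := dist_adj_cases a vx; have := dist_adj_cases v ab.
  by rewrite (distC a v) (distC a x) (distC b v) in bv *; lia.
have median_xwa u : e u x -> e u w -> dist u a = al -> u = median x w a.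
  move=> ux uw ua; apply: median_uniq; rewrite /between.
  - by rewrite (distC x u) (dist_adj ux) (dist_adj uw) xw2.
  - by rewrite (distC w u) (dist_adj uw) ua wa addnC.
  - by rewrite (distC a u) (distC a x) (dist_adj ux) ua xa addnC.
have z_v : z = v by rewrite (median_xwa z) // (median_xwa v).
by move: bv; rewrite -z_v distC zb; lia.
Qed.

(* A geodesic from [x] to [y] that leaves [W_ba] at its first edge.  Such a
   configuration always yields one with a shorter geodesic, so none exists. *)
Definition bad_step x y x' :=
  [/\ halfspace b a x, halfspace b a y, e x x', between x y x' & halfspace a b x'].

Lemma bad_step_dist x y x' : bad_step x y x' ->
  [/\ dist x b = dist x' a, dist x a = dist x' a + 1, dist x' b = dist x' a + 1
    & dist x' y + 1 = dist x y].
Proof.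
move=> [bax bay xx' xyx' abx']; have [] := cross_dist abx' bax (e_sym xx').
by move: xyx'; rewrite /between (dist_adj xx'); split=> //; lia.
Qed.

Lemma bad_step_median_stay x y x' : bad_step x y x' -> median x' y a = x' -> False.
Proof.
move=> bad m_x'; have [bax bay xx' xyx' abx'] := bad.
have [xb xa x'b x'y] := bad_step_dist bad.
set al := dist x' a in xb xa x'b; set t := dist x y in x'y.
have [_ yax' _] := medianP x' y a; rewrite m_x' /between in yax'.
have ya : dist y a = dist y x' + al by rewrite -yax' distC.
have yb : dist y b + 1 = dist y a.
  by move: bay; rewrite /halfspace; case: (dist_adj_cases y ab); lia.
have [] := medianP x y b; rewrite /between -/t; set nu := median x y b => xynu ybnu bxnu.
rewrite (distC b x) xb in bxnu.
have := distC nu y; have := distC b nu; have := distC nu x; have := distC y x' => ? ? ? ?.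
have xnu : e x nu by apply: dist1_adj; lia.
have x'_nu : x' <> nu.
  move=> x'nu; move: xynu bxnu; rewrite -x'nu (distC x x') (dist_adj (e_sym xx')).
  by rewrite (distC b x') x'b; lia.
have [w [wx' wnu yw]] : exists w, [/\ e w x', e w nu & dist y w + 1 = t - 1].
  by apply: (quadrangle xx' xnu x'_nu); rewrite distC; lia.
have baw : halfspace b a w.
  rewrite /halfspace; have := dist_adj_le b (e_sym wnu); have := dist_triangle y w a.
  have := dist_adj_le a (e_sym wx'); rewrite (distC b w) (distC b nu) (distC a w) (distC a x').
  lia.
have x_w := cross_neighbor_uniq abx' bax baw (e_sym xx') (e_sym wx').
by move: yw; rewrite -x_w distC -/t; lia.
Qed.

Lemma bad_step_descent x y x' : bad_step x y x' -> median x' y a <> x' ->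
  exists w z, bad_step w y z /\ dist w y < dist x y.
Proof.
move=> bad m_x'; have [bax bay xx' xyx' abx'] := bad.
have [xb xa x'b x'y] := bad_step_dist bad.
set al := dist x' a in xb xa x'b; set t := dist x y in x'y.
have [x'ym _ amx'] := medianP x' y a; set mu := median x' y a in m_x' x'ym amx'.
case E : (dist x' mu) => [|k]; first by move/dist_eq0: E => /esym.
have [z [x'z zmu]] := dist_succ E.
have x'muz : between x' mu z by rewrite /between (dist_adj x'z) zmu E.
have [x'yz _] := between_sub x'ym x'muz.
have [x'az _] := between_sub (betweenC amx') x'muz.
have abz : halfspace a b z by apply: halfspace_between (e_sym ab) abx' (betweenC x'az).
have za : dist z a + 1 = al by move: x'az; rewrite /between (dist_adj x'z) -/al; lia.
have zb : dist z b = al by move: abz; rewrite /halfspace; case: (dist_adj_cases z ab); lia.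
have x_z : x <> z by move=> x_z; move: za; rewrite -x_z xa; lia.
have [w [wx wz bw]] : exists w, [/\ e w x, e w z & dist b w + 1 = al].
  by apply: (quadrangle (e_sym xx') x'z x_z); rewrite distC ?x'b ?xb ?zb ?addn1.
have baw : halfspace b a w.
  apply: (halfspace_between ab bax).
  by rewrite /between (distC w x) (dist_adj (e_sym wx)) (distC b x) xb; lia.
have [xyz xzx'] := between_subr xyx' x'yz.
have xz2 : dist x z = 2 by move: xzx'; rewrite /between (dist_adj xx') (dist_adj x'z).
have wy : dist w y + 1 = t.
  have := dist_triangle w z y; have := dist_triangle x w y.
  by rewrite (dist_adj wz) (distC x w) (dist_adj wx); move: xyz; rewrite /between -/t; lia.
exists w, z; split; last lia.
by split=> //; move: xyz; rewrite /between (dist_adj wz) -/t; lia.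
Qed.

Lemma no_bad_step x y x' : ~ bad_step x y x'.
Proof.
move Hn : (dist x y) => n; elim/ltn_ind: n x x' Hn => n IH x x' xyn bad.
have [m_x'|m_x'] := pselect (median x' y a = x'); first exact: bad_step_median_stay bad m_x'.
have [w [z [badw wy]]] := bad_step_descent bad m_x'.
by apply: (IH (dist w y) _ w z erefl badw); rewrite -xyn.
Qed.

Lemma halfspace_convex x y z :
  halfspace b a x -> halfspace b a y -> between x y z -> halfspace b a z.
Proof.
move Hn : (dist x z) => n; elim: n x Hn => [|n IH] x xzn bax bay xyz.
  by move/dist_eq0: xzn => <-.
have [x' [xx' x'z]] := dist_succ xzn.
have xzx' : between x z x' by rewrite /between (dist_adj xx') x'z xzn add1n.
have [xyx' x'yz] := between_sub xyz xzx'.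
apply: (IH x' x'z _ bay x'yz); rewrite -[halfspace b a x']negbK halfspaceN; apply/negP => abx'.
exact: no_bad_step (And5 bax bay xx' xyx' abx').
Qed.

End Halfspace.

Section Interval.
Variables p q : T.
Local Notation L := (dist p q).

Definition step_toward (z : T) : T :=
  if pselect (exists c, e z c /\ dist c q + 1 = dist z q) is left ex then sval (cid ex) else z.

Lemma step_towardP z : 0 < dist z q ->
  e z (step_toward z) /\ dist (step_toward z) q + 1 = dist z q.
Proof.
move=> zq; rewrite /step_toward; case: pselect => [ex|[]]; first by case: cid.
have [c [zc cq]] := dist_succ (esym (prednK zq)); exists c; split=> //; lia.
Qed.

Definition geodesic (i : nat) : T := iter i step_toward p.

Lemma geodesic_dist i : i <= L -> dist (geodesic i) q = L - i /\ dist p (geodesic i) = i.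
Proof.
elim: i => [|i IH] iL; first by rewrite distxx subn0.
have [giq pgi] := IH (ltnW iL).
have [gi_adj gi_q] := step_towardP (ltac:(lia) : 0 < dist (geodesic i) q).
rewrite /geodesic iterS -/(geodesic i); split; first lia.
have := dist_triangle p (geodesic i) (step_toward (geodesic i)).
have := dist_triangle p (step_toward (geodesic i)) q; rewrite (dist_adj gi_adj); lia.
Qed.

Lemma geodesic_adj i : i < L -> e (geodesic i) (geodesic i.+1).
Proof.
move=> iL; have [giq _] := geodesic_dist (ltnW iL).
by have [] := step_towardP (ltac:(lia) : 0 < dist (geodesic i) q).
Qed.

Lemma geodesicL : geodesic L = q.
Proof. by have [] := geodesic_dist (leqnn L); rewrite subnn => /dist_eq0. Qed.

Lemma dist_geodesic i j : i <= j -> j <= L -> dist (geodesic i) (geodesic j) = j - i.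
Proof.
move=> ij jL; have [_ pj] := geodesic_dist jL; have [_ pi] := geodesic_dist (leq_trans ij jL).
suff : dist (geodesic i) (geodesic j) <= j - i.
  by have := dist_triangle p (geodesic i) (geodesic j); lia.
elim: j ij jL {pj} => [|j IH] ij jL; first by move: ij; rewrite leqn0 => /eqP->; rewrite distxx.
have [->|ij'] := eqVneq i j.+1; first by rewrite distxx.
have := dist_adj_le (geodesic i) (geodesic_adj jL); have := IH ltac:(lia) (ltnW jL); lia.
Qed.

Lemma between_geodesic i : i <= L -> between p q (geodesic i).
Proof. by move=> iL; have [iq pi] := geodesic_dist iL; rewrite /between iq pi; lia. Qed.

Definition label (x : T) : {set 'I_L} :=
  [set i : 'I_L | halfspace (geodesic i.+1) (geodesic i) x].

Lemma card_label x : between p q x -> #|label x| = dist p x.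
Proof.
move=> pqx.
pose crossed j := \sum_(0 <= i < j) (halfspace (geodesic i.+1) (geodesic i) x : nat).
have walk_count j : j <= L -> dist x (geodesic j) + 2 * crossed j = dist x p + j.
  elim: j => [|j IH] jL; first by rewrite /crossed big_geq.
  rewrite /crossed big_nat_recr //= -/(crossed j); have := IH (ltnW jL).
  case: (dist_adj_cases x (geodesic_adj jL)); rewrite /halfspace; case: ltnP => /= ?; lia.
have : #|label x| = crossed L.
  rewrite -sum1_card big_mkcond /= /crossed big_mkord.
  by apply: eq_bigr => i _; rewrite inE; case: halfspace.
by move: pqx (walk_count L (leqnn L)); rewrite /between geodesicL distC; lia.
Qed.

Lemma label_p : label p = set0.
Proof. by apply/cards0_eq; rewrite card_label ?distxx //; apply: between_l. Qed.

Lemma label_q (i : 'I_L) : halfspace (geodesic i.+1) (geodesic i) q.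
Proof.
have [iq _] := geodesic_dist (ltnW (ltn_ord i)); have [i1q _] := geodesic_dist (ltn_ord i).
by rewrite /halfspace (distC q) (distC q (geodesic i)); have := ltn_ord i; lia.
Qed.

Lemma mem_label_between i x y z :
  i \in label x -> i \in label y -> between x y z -> i \in label z.
Proof.
rewrite !inE => xi yi; have := halfspace_convex (geodesic_adj (ltn_ord i)) xi yi.
by apply.
Qed.

Lemma label_subset x z : between p q z -> between p z x -> label x \subset label z.
Proof.
move=> pqz pzx; apply/subsetP => i xi; have [_ xqz] := between_sub pqz pzx.
by apply: mem_label_between xi _ xqz; rewrite inE label_q.
Qed.

Definition meet x y := median p x y.

Lemma meetP x y : between p q x ->
  [/\ between p q (meet x y), between p x (meet x y) & between p y (meet x y)].
Proof.
move=> pqx; have [pxm _ ypm] := medianP p x y.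
by have [] := between_sub pqx pxm; split; last apply: betweenC.
Qed.

Lemma dist_meet x y : dist x y + 2 * dist p (meet x y) = dist p x + dist p y.
Proof.
have [] := medianP p x y; rewrite /between -/(meet x y).
have := distC (meet x y) p; have := distC y (meet x y).
by have := distC y p; have := distC (meet x y) x; lia.
Qed.

Lemma label_meet x y : between p q x -> between p q y -> label (meet x y) = label x :&: label y.
Proof.
move=> pqx pqy; have [pqm pxm pym] := meetP y pqx.
apply/eqP; rewrite eqEsubset subsetI !label_subset //=.
apply/subsetP => i; rewrite inE => /andP[xi yi]; have [_ xym _] := medianP p x y.
exact: mem_label_between xi yi xym.
Qed.

Lemma dist_label x y : between p q x -> between p q y ->
  dist x y + 2 * #|label x :&: label y| = #|label x| + #|label y|.
Proof.
move=> pqx pqy; have [pqm _ _] := meetP y pqx.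
by rewrite -label_meet // !card_label //; apply: dist_meet.
Qed.

Lemma label_inj x y : between p q x -> between p q y -> label x = label y -> x = y.
Proof.
by move=> pqx pqy xy; apply: dist_eq0; have := dist_label pqx pqy; rewrite xy setIid; lia.
Qed.

Definition join x y := median x y q.

Lemma joinP x y : between p q x -> between p q (join x y) /\ between p (join x y) x.
Proof. by move=> pqx; have [_ _ qxj] := medianP x y q; apply: between_subr pqx (betweenC qxj). Qed.

Lemma label_join x y : between p q x -> between p q y -> label (join x y) = label x :|: label y.
Proof.
move=> pqx pqy; have [pqj pjx] := joinP y pqx.
have jyx : join y x = join x y.
  by have [xyj yqj qxj] := medianP x y q; apply/esym/median_uniq; apply: betweenC.
have [_] := joinP x pqy; rewrite jyx => pjy.
apply/eqP; rewrite eq_sym eqEcard subUset !label_subset //=.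
have [xyj _ _] := medianP x y q; move: xyj pjx pjy; rewrite /between -/(join x y).
have := dist_label pqx pqy; have := cardsUI (label x) (label y).
rewrite !card_label //; have := distC (join x y) x; have := distC y (join x y).
set U := #|label x :|: label y|; set I := #|label x :&: label y|. lia.
Qed.

Definition label_le (i j : 'I_L) : bool :=
  `[< forall x, between p q x -> j \in label x -> i \in label x >].

Lemma label_leP i j :
  reflect (forall x, between p q x -> j \in label x -> i \in label x) (label_le i j).
Proof. exact: asboolP. Qed.

Lemma label_le_refl : reflexive label_le.
Proof. by move=> i; apply/label_leP. Qed.

Lemma label_le_trans : transitive label_le.
Proof. by move=> j i k /label_leP ij /label_leP jk; apply/label_leP => x pqx /jk/ij; apply. Qed.

Lemma label_geodesic m (i : 'I_L) : m <= L -> (i \in label (geodesic m)) = (i < m).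
Proof.
move=> mL; rewrite inE /halfspace (distC (geodesic m)) (distC (geodesic m) (geodesic i)).
have := ltn_ord i; case: (leqP m i) => mi iL.
- by rewrite (distC (geodesic i.+1)) (distC (geodesic i)) !dist_geodesic //; lia.
- by rewrite !dist_geodesic //; lia.
Qed.

Lemma label_le_anti : antisymmetric label_le.
Proof.
move=> i j /andP[/label_leP ij /label_leP ji]; apply: val_inj.
have [lt|lt|//] := ltngtP i j.
- have := ji _ (between_geodesic (ltn_ord i)); rewrite !label_geodesic ?ltnSn //; lia.
- have := ij _ (between_geodesic (ltn_ord j)); rewrite !label_geodesic ?ltnSn //; lia.
Qed.

Lemma label_down_closed x : between p q x -> down_closed label_le (label x).
Proof. by move=> pqx i j /label_leP; apply. Qed.

Lemma label_principal i : exists2 x, between p q x & label x = [set j | label_le j i].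
Proof.
have ex_r : exists r, `[< exists2 x, between p q x & i \in label x /\ dist p x = r >].
  by exists L; apply/asboolP; exists q; rewrite ?inE ?label_q //; apply: between_r.
case: (ex_minnP ex_r) => r /asboolP[x pqx [ix px]] rmin.
have x_least y : between p q y -> i \in label y -> label x \subset label y.
  move=> pqy iy; have [pqm pxm pym] := meetP y pqx.
  have im : i \in label (meet x y) by rewrite label_meet // inE ix iy.
  have := rmin (dist p (meet x y)) ltac:(by apply/asboolP; exists (meet x y)).
  move: pxm; rewrite /between => pxm rm.
  have -> : x = meet x y by apply: dist_eq0; rewrite distC; lia.
  by rewrite label_meet // subsetIr.
exists x => //; apply/setP => j; rewrite [RHS]inE.
apply/idP/(label_leP j i) => [jx y pqy iy | ji]; last exact: ji x pqx ix.
exact: subsetP (x_least y pqy iy) j jx.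
Qed.

Lemma label_surj D : down_closed label_le D -> exists2 x, between p q x & label x = D.
Proof.
move=> Dd; suff [x pqx xD] : exists2 x, between p q x &
    forall j, (j \in label x) = has (label_le j) (enum D).
  exists x => //; apply/setP => j; rewrite xD; apply/hasP/idP => [[i] | jD].
    by rewrite mem_enum => iD ji; apply: Dd ji iD.
  by exists j; rewrite ?mem_enum ?label_le_refl.
elim: (enum D) => [|i s [x pqx xs]].
  by exists p => [|j]; rewrite ?label_p ?inE //; apply: between_l.
have [u pqu ui] := label_principal i.
have [pqj _] := joinP x pqu.
by exists (join u x) => // j; rewrite label_join // inE ui inE xs.
Qed.

Lemma dist_labelD x y : between p q x -> between p q y ->
  dist x y = #|label x :\: label y| + #|label y :\: label x|.
Proof.
move=> pqx pqy; have := dist_label pqx pqy.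
have := cardsID (label y) (label x); have := cardsID (label x) (label y).
by rewrite (setIC (label y)); lia.
Qed.

Lemma cube_of_labels m (D0 : {set 'I_L}) (a : 'I_m -> 'I_L) :
  injective a -> (forall i, a i \notin D0) ->
  (forall S : {set 'I_m}, down_closed label_le (D0 :|: a @: S)) ->
  exists f : {ffun 'I_m -> bool} -> T, cube_in e (ginterval e p q) f /\
    forall x, label (f x) = D0 :|: a @: [set i | x i].
Proof.
move=> a_inj aD0 Dd.
pose f (x : {ffun 'I_m -> bool}) := s2val (cid2 (label_surj (Dd [set i | x i]))).
have pqf x : between p q (f x) by rewrite /f; case: cid2.
have labelf x : label (f x) = D0 :|: a @: [set i | x i] by rewrite /f; case: cid2.
have diff (S S' : {set 'I_m}) : (D0 :|: a @: S) :\: (D0 :|: a @: S') = a @: (S :\: S').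
  apply/setP => j; have [[i <-]|noj] := pselect (exists i, a i = j).
    by rewrite !inE (negbTE (aD0 i)) !mem_imset // !inE.
  have nj (S'' : {set 'I_m}) : (j \in a @: S'') = false.
    by apply/imsetP => -[i _ ji]; apply: noj; exists i.
  by rewrite !inE !nj; case: (j \in D0).
have dist_f x y : dist (f x) (f y) = #|[set i | x i != y i]|.
  rewrite dist_labelD // !labelf !diff !card_imset //.
  have -> : [set i | x i != y i] =
      ([set i | x i] :\: [set i | y i]) :|: ([set i | y i] :\: [set i | x i]).
    by apply/setP => i; rewrite !inE; case: (x i); case: (y i).
  rewrite cardsU (_ : _ :&: _ = set0) ?cards0 ?subn0 //.
  by apply/setP => i; rewrite !inE; case: (x i); case: (y i).
exists f; split=> //; split=> [x y fxy | x y xy | x]; last exact/gintervalE.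
  apply/ffunP => i; have := dist_f x y; rewrite fxy distxx.
  by move=> /esym/cards0_eq/setP/(_ i); rewrite !inE => /negbFE/eqP.
by apply: dist1_adj; rewrite dist_f.
Qed.

Lemma neighbors_cube m (y : 'I_m -> T) : injective y ->
  (forall i, e p (y i) /\ ginterval e p q (y i)) ->
  exists f : {ffun 'I_m -> bool} -> T,
    [/\ cube_in e (ginterval e p q) f, (exists x, f x = p) & forall i, exists x, f x = y i].
Proof.
move=> y_inj yi.
have pqy i : between p q (y i) by apply/gintervalE; case: (yi i).
have ex_a i : exists j, label (y i) = [set j].
  by apply/cards1P; rewrite card_label // dist_adj //; case: (yi i).
pose a i := sval (cid (ex_a i)).
have label_y i : label (y i) = [set a i] := svalP (cid (ex_a i)).
have a_inj : injective a by move=> i j aij; apply: y_inj; apply: label_inj; rewrite ?label_y ?aij.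
have [f [f_cube labelf]] : exists f : {ffun 'I_m -> bool} -> T,
    cube_in e (ginterval e p q) f /\ forall x, label (f x) = set0 :|: a @: [set i | x i].
  apply: cube_of_labels => // [i|S j' j j'j]; first by rewrite inE.
  rewrite !set0U => /imsetP[i iS ji]; rewrite ji in j'j.
  have := label_down_closed (pqy i) j'j; rewrite label_y !inE eqxx => /(_ isT)/eqP->.
  exact: imset_f.
have label_f x : label (f x) = a @: [set i | x i] by rewrite labelf set0U.
have [_ _ pqf] := f_cube; have {}pqf x : between p q (f x) by apply/gintervalE/pqf.
exists f; split=> // [|i].
  exists [ffun => false]; apply: label_inj => //; first exact: between_l.
  rewrite label_f label_p (_ : [set i | _] = set0) ?imset0 //.
  by apply/setP => i; rewrite !inE ffunE.
exists [ffun j => j == i]; apply: label_inj => //.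
rewrite label_f label_y (_ : [set j | _] = [set i]) ?imset_set1 //.
by apply/setP => j; rewrite !inE ffunE.
Qed.

Lemma antichain_cube (B : {set 'I_L}) : antichain label_le B ->
  exists f : {ffun 'I_#|B| -> bool} -> T, cube_in e (ginterval e p q) f.
Proof.
move=> /antichainP Banti; pose a (i : 'I_#|B|) : 'I_L := enum_val i.
have aB i : a i \in B by apply: enum_valP.
pose D0 := [set j | [exists i, label_le j (a i)] && (j \notin B)].
have [|i|S j' j j'j|f [f_cube _]] := @cube_of_labels _ D0 a; last by exists f.
- exact: enum_val_inj.
- by rewrite inE aB andbF.
have [j'B|j'B] := boolP (j' \in B); rewrite !inE => /orP[/andP[/existsP[i ji] jB]|/imsetP[i iS ji]].
- have j'i := label_le_trans j'j ji; have j'_ai := Banti _ _ j'B (aB i) j'i.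
  rewrite -j'_ai in ji; move: j'B.
  by rewrite (label_le_anti (introT andP (conj j'j ji))) (negbTE jB).
- by rewrite ji in j'j; rewrite (Banti _ _ j'B (aB i) j'j) imset_f ?orbT.
- by rewrite j'B andbT; apply/orP; left; apply/existsP; exists i; apply: label_le_trans ji.
- by rewrite j'B andbT; apply/orP; left; apply/existsP; exists i; rewrite -ji.
Qed.

Local Notation interval := (ginterval e p q).
Local Notation induced := (@ginduced T e interval).

Lemma induced_walk n (x y : {z | interval z}) : dist (sval x) (sval y) = n ->
  (forall z, between (sval x) (sval y) z -> interval z) -> gwalk induced x y n.
Proof.
elim: n x y => [|n IH] [x pqx] [y pqy] /= xyn xy_sub.
  by move/dist_eq0: xyn => xy; subst y; rewrite (Prop_irrelevance pqx pqy); apply: walk0.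
have [c [xc cy]] := dist_succ xyn.
have xyc : between x y c by rewrite /between (dist_adj xc) cy xyn.
apply: (@walkS _ _ _ (exist _ c (xy_sub c xyc))) => //.
by apply: IH => //= z cyz; apply: xy_sub; have [] := between_subr xyc cyz.
Qed.

Lemma induced_gdist (x y : {z | interval z}) n :
  gdist induced x y n <-> dist (sval x) (sval y) = n.
Proof.
suff xy_walk : gwalk induced x y (dist (sval x) (sval y)).
  have walk_ge m : gwalk induced x y m -> dist (sval x) (sval y) <= m.
    by move=> xym; apply: dist_le_walk; apply: gwalk_map xym => u v.
  split=> [[xyn xymin] | <-]; last by split.
  by apply/eqP; rewrite eqn_leq walk_ge // xymin.
case: x y => [x xI] [y yI] /=; have /gintervalE pqx := xI; have /gintervalE pqy := yI.
have [pqm pxm pym] := meetP y pqx; have [_ xym _] := medianP p x y.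
have /gintervalE mI := pqm.
have sub_interval u v : between p q u -> between p u v -> forall z, between v u z -> interval z.
  move=> pqu puv z vuz; apply/gintervalE.
  by have [puz _] := between_subr puv vuz; have [] := between_sub pqu puz.
rewrite -xym; apply: (gwalk_cat (b := exist _ (meet x y) mI)); apply: induced_walk => //= z.
- move=> xmz; exact: (sub_interval _ _ pqx pxm z (betweenC xmz)).
- by move=> myz; exact: (sub_interval _ _ pqy pym z myz).
Qed.

Lemma interval_grid_embedding k :
  (forall m (f : {ffun 'I_m -> bool} -> T), cube_in e interval f -> m <= k) ->
  exists g : {z | interval z} -> 'I_k -> int,
    forall x y n, gdist induced x y n <-> gdist (@grid_adj k) (g x) (g y) n.
Proof.
move=> cube_le.
have width : width_at_most label_le [set: 'I_L] k.
  by move=> B _ /antichain_cube[f /cube_le].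
have [c c_chain] := dilworth label_le_refl label_le_anti label_le_trans width.
exists (fun z => natpt (fun t => #|label (sval z) :&: [set i | c i == t]|)) => x y n.
have [/gintervalE pqx /gintervalE pqy] := conj (svalP x) (svalP y).
rewrite induced_gdist grid_gdist_natpt (dist_labelD pqx pqy).
by rewrite (down_closed_chains_dist c_chain) //; apply: label_down_closed.
Qed.

End Interval.

End MedianGraph.

Theorem mainTheorem6 (T : Type) (e : T -> T -> Prop) (p q : T) (k : nat) :
  median_graph e ->
  (exists f : ({ffun 'I_k -> bool} -> T), cube_in e (ginterval e p q) f) ->
  (forall (m : nat) (f : {ffun 'I_m -> bool} -> T),
      cube_in e (ginterval e p q) f -> m <= k) ->
  (forall v, ginterval e p q v ->
     forall (m : nat) (y : 'I_m -> T), injective y ->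
       (forall i, e v (y i) /\ ginterval e v q (y i)) ->
       exists f : ({ffun 'I_m -> bool} -> T),
         [/\ cube_in e (ginterval e v q) f,
             (exists x, f x = v) &
             forall i, exists x, f x = y i])
  /\
  (exists g : ({z : T | ginterval e p q z} -> ('I_k -> int)),
     forall a b n,
       gdist (@ginduced T e (ginterval e p q)) a b n <-> gdist (@grid_adj k) (g a) (g b) n).
Proof.
move=> [[e_sym e_irr] e_conn e_median] _ cube_le; split.
- by move=> v _ m y; apply: neighbors_cube.
- exact: interval_grid_embedding.
Qed.
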